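(* Let $A$ be a finite alphabet, let $\sigma : A^\star \to A^\star$ be a morphism and let $w\in A^\star$ be such that for every $a\in A$ there exists $m\in\mathbb{N}$ such that the letter $a$ occurs in $\sigma^m(w)$. Then $$|\sigma^n(w)| \asymp \sum_{a\in A} |\sigma^n(a)|$$ as $n\to\infty$.
   Context: $A^\star$ is the free monoid of finite words over $A$; a morphism satisfies $\sigma(uv)=\sigma(u)\sigma(v)$; $\sigma^n$ is the $n$-th iterate; $|u|$ is the length of $u$. For $f,g:\mathbb{N}\to\mathbb{C}$, $f(n) \preceq g(n)$ means there is a real $\lambda>0$ such that the set $\{n\in\mathbb{N} : |f(n)| > \lambda |g(n)|\}$ is finite, and $f(n)\asymp g(n)$ means both $f(n)\preceq g(n)$ and $g(n)\preceq f(n)$. *)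

From mathcomp Require Import all_boot.
From Stdlib Require Import Reals.

Set Implicit Arguments.
Unset Strict Implicit.
Unset Printing Implicit Defensive.

Definition is_morphism (A : Type) (sigma : seq A -> seq A) : Prop :=
  forall u v : seq A, sigma (u ++ v) = sigma u ++ sigma v.

(* f ⪯ g : exists real lambda > 0 such that {n | |f n| > lambda |g n|} is finite.
   For nat-valued f, g, |.| is the identity; "finite subset of N" is stated as
   "bounded", i.e. contained in [0, N). *)
Definition preceq (f g : nat -> nat) : Prop :=
  exists lambda : R, (0 < lambda)%R /\
    exists N : nat, forall n : nat, (N <= n)%N -> ~ (INR (f n) > lambda * INR (g n))%R.

Definition asymp (f g : nat -> nat) : Prop := preceq f g /\ preceq g f.

From mathcomp Require Import all_boot.
From Stdlib Require Import Reals.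

(* The length of an image under a morphism is the sum of the lengths of the
   images of its letters.  Hence |s^n(w)| <= |w| * sum_a |s^n(a)|.  Conversely,
   if a occurs in s^m(w) then |s^n(a)| <= |s^(n+m)(w)| = |s^m(s^n(w))|, and a
   morphism multiplies lengths by at most K = sum_b |s(b)| per step, so
   |s^n(a)| <= K^m |s^n(w)|; summing over the finitely many letters gives the
   reverse bound. *)

Section Morphism.
Context {A : Type} {tau : seq A -> seq A}.
Hypothesis tau_morph : is_morphism tau.

Lemma morphism_nil : tau [::] = [::].
Proof.
apply/size0nil/eqP; rewrite -(eqn_add2r (size (tau [::]))) add0n.
by rewrite -size_cat -tau_morph.
Qed.

Lemma size_morphism (s : seq A) : size (tau s) = \sum_(x <- s) size (tau [:: x]).
Proof.
elim: s => [|x s IHs]; first by rewrite big_nil morphism_nil.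
by rewrite big_cons -IHs -size_cat -tau_morph.
Qed.

End Morphism.

Lemma is_morphism_iter {A : Type} {sigma : seq A -> seq A} (n : nat) :
  is_morphism sigma -> is_morphism (iter n sigma).
Proof. by move=> sigma_morph; elim: n => [//|n IHn] u v /=; rewrite IHn. Qed.

Lemma sum_seq_le_size_mul_sum {A : finType} (f : A -> nat) (s : seq A) :
  \sum_(x <- s) f x <= size s * \sum_(a : A) f a.
Proof.
elim: s => [|x s IHs]; first by rewrite big_nil.
by rewrite big_cons mulSn leq_add // (bigD1 x) //= leq_addr.
Qed.

Lemma leq_sum_seq_mem {A : eqType} (f : A -> nat) (s : seq A) (a : A) :
  a \in s -> f a <= \sum_(x <- s) f x.
Proof. by move=> a_s; rewrite (big_rem a a_s) leq_addr. Qed.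

(* [expn] rather than [^]: importing Reals rebinds [^] on nat to [Nat.pow]. *)
Lemma size_iter_morphism_le {A : finType} {sigma : seq A -> seq A} (m : nat)
    (s : seq A) :
  is_morphism sigma ->
  size (iter m sigma s) <= expn (\sum_(b : A) size (sigma [:: b])) m * size s.
Proof.
move=> sigma_morph; elim: m => [|m IHm]; first by rewrite mul1n.
rewrite iterS (size_morphism sigma_morph) (leq_trans (sum_seq_le_size_mul_sum _ _)) //.
by rewrite expnSr mulnAC leq_mul2r IHm orbT.
Qed.

Lemma preceq_of_leq_mul (C : nat) (f g : nat -> nat) :
  (forall n, f n <= C * g n) -> preceq f g.
Proof.
move=> le_fg; exists (INR C.+1); split; first exact/lt_0_INR/ltP.
exists 0 => n _; apply/Rle_not_lt; rewrite -mult_INR; apply/le_INR/leP.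
exact: leq_trans (le_fg n) (leq_mul (leqnSn C) (leqnn _)).
Qed.

Theorem lemma2 (A : finType) (sigma : seq A -> seq A) (w : seq A) :
  is_morphism sigma ->
  (forall a : A, exists m : nat, a \in iter m sigma w) ->
  asymp (fun n => size (iter n sigma w))
        (fun n => \sum_(a : A) size (iter n sigma [:: a])).
Proof.
move=> sigma_morph occurs; split.
  apply: (preceq_of_leq_mul (size w)) => n.
  rewrite (size_morphism (is_morphism_iter n sigma_morph)).
  exact: sum_seq_le_size_mul_sum.
pose K := \sum_(b : A) size (sigma [:: b]).
pose m a := ex_minn (occurs a).
have m_occurs a : a \in iter (m a) sigma w by rewrite /m; case: ex_minnP.
apply: (preceq_of_leq_mul (\sum_(a : A) expn K (m a))) => n.
rewrite big_distrl /=; apply: leq_sum => a _.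
have letter_le_word : size (iter n sigma [:: a]) <= size (iter (m a) sigma (iter n sigma w)).
  rewrite -iterD addnC iterD [leqRHS](size_morphism (is_morphism_iter n sigma_morph)).
  by apply: leq_sum_seq_mem; apply: m_occurs.
exact: leq_trans letter_le_word (size_iter_morphism_le (m a) _ sigma_morph).
Qed.
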